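(* Let $A$ be a finite nonempty set, $F\subseteq\mathrm{Op}(A)$ and $Q\subseteq\mathrm{gQuord}(A)$. Then (i) $\mathrm{gQuord}(A,F)=\mathrm{gQuord}(A,\mathrm{trl}(F))$; (ii) $\mathrm{Pol}\,Q=(\mathrm{End}\,Q)^{*}$; in particular $(\mathrm{End}\,Q)^{*}$ is a clone and $\mathrm{End}\,Q$ is u-closed.
   Context: $\mathrm{Op}(A)$ is the set of all operations on $A$ of positive finite arity. An operation preserves a relation $\rho\subseteq A^m$ if applying it componentwise to tuples of $\rho$ yields a tuple of $\rho$. $\mathrm{Pol}\,Q$ (resp. $\mathrm{End}\,Q$) is the set of all operations (resp. unary maps) preserving every relation in $Q$. A translation of an $n$-ary $f$ is a unary map $x\mapsto f(a_1,\dots,a_{i-1},x,a_{i+1},\dots,a_n)$ with fixed $a_j\in A$; $\mathrm{trl}(f)$ is the set of translations of $f$ ($\mathrm{trl}(f)=\{f\}$ for unary $f$), $\mathrm{trl}(F)=\bigcup_{f\in F}\mathrm{trl}(f)$, and $M^*:=\{f\in\mathrm{Op}(A)\mid\mathrm{trl}(f)\subseteq M\}$ for $M\subseteq A^A$. A relation $\rho\subseteq A^m$ is a generalized quasiorder if it is reflexive and transitive in the sense: for every $m\times m$-matrix over $A$ whose rows and columns all lie in $\rho$, its diagonal lies in $\rho$. $\mathrm{gQuord}(A)$ is the set of all generalized quasiorders on $A$, and $\mathrm{gQuord}(A,F)$ is the set of those preserved by all $f\in F$. For $M\subseteq A^A$, the u-closure $\overline{M}$ is the intersection of all monoids $N$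 with $M\subseteq N\le A^A$ such that $N^*$ is a clone; a monoid $M$ is u-closed if $\overline{M}=M$. *)

From mathcomp Require Import all_boot.
Set Implicit Arguments. Unset Strict Implicit. Unset Printing Implicit Defensive.

(* An operation on A of positive finite arity (arity f).+1. *)
Record op (A : Type) := Op { arity : nat; opfun : ('I_arity.+1 -> A) -> A }.

Record relation (A : Type) := Rel { rarity : nat; rmem : ('I_rarity -> A) -> Prop }.
Arguments rmem {A} r _.
Arguments opfun {A} o _.
Arguments Op {A} arity opfun.

Section Defs.
Variable A : finType.

Definition preserves (f : op A) (rho : relation A) : Prop :=
  forall r : 'I_(arity f).+1 -> ('I_(rarity rho) -> A),
    (forall k, rmem rho (r k)) -> rmem rho (fun i => opfun f (fun k => r k i)).

Definition preservesU (g : A -> A) (rho : relation A) : Prop :=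
  forall r, rmem rho r -> rmem rho (fun i => g (r i)).

Definition Pol (Q : relation A -> Prop) (f : op A) : Prop :=
  forall rho, Q rho -> preserves f rho.

Definition End (Q : relation A -> Prop) (g : A -> A) : Prop :=
  forall rho, Q rho -> preservesU g rho.

Definition upd n (a : 'I_n -> A) (i : 'I_n) (x : A) : 'I_n -> A :=
  fun j => if j == i then x else a j.

Definition is_translation (f : op A) (g : A -> A) : Prop :=
  exists (i : 'I_(arity f).+1) (a : 'I_(arity f).+1 -> A),
    forall x, g x = opfun f (upd a i x).

Definition trl (F : op A -> Prop) (g : A -> A) : Prop :=
  exists f, F f /\ is_translation f g.

Definition star (M : (A -> A) -> Prop) (f : op A) : Prop :=
  forall g, is_translation f g -> M g.

Definition reflexive_rel (rho : relation A) : Prop :=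
  forall a : A, rmem rho (fun _ => a).

Definition transitive_rel (rho : relation A) : Prop :=
  forall M : 'I_(rarity rho) -> 'I_(rarity rho) -> A,
    (forall i, rmem rho (fun j => M i j)) ->
    (forall j, rmem rho (fun i => M i j)) ->
    rmem rho (fun i => M i i).

Definition gquord (rho : relation A) : Prop := reflexive_rel rho /\ transitive_rel rho.

Definition gQuordF (F : op A -> Prop) (rho : relation A) : Prop :=
  gquord rho /\ forall f, F f -> preserves f rho.

Definition gQuordU (G : (A -> A) -> Prop) (rho : relation A) : Prop :=
  gquord rho /\ forall g, G g -> preservesU g rho.

Definition clone (C : op A -> Prop) : Prop :=
  (forall n (i : 'I_n.+1), C (@Op A n (fun x => x i))) /\
  (forall (f : op A) m (gs : 'I_(arity f).+1 -> ('I_m.+1 -> A) -> A),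
     C f -> (forall k, C (@Op A m (gs k))) ->
     C (@Op A m (fun x => opfun f (fun k => gs k x)))).

Definition monoid (M : (A -> A) -> Prop) : Prop :=
  M (fun x => x) /\ forall g h, M g -> M h -> M (fun x => g (h x)).

Definition u_closure (M : (A -> A) -> Prop) (g : A -> A) : Prop :=
  forall N, monoid N -> (forall h, M h -> N h) -> clone (star N) -> N g.

Definition u_closed (M : (A -> A) -> Prop) : Prop :=
  monoid M /\ forall g, u_closure M g <-> M g.

End Defs.

(* A translation freezes all but one argument, so it preserves every reflexive
   relation preserved by f.  Conversely, if the translations of f preserve a
   generalized quasiorder rho, replace the arguments of f one at a time by
   tuples of rho: the matrix whose (i, j) entry takes the next argument from
   the j-th coordinate of the new tuple has rows in rho (images under a
   translation) and columns in rho (the previous stage), so by transitivity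
   its diagonal, the next stage, lies in rho.  Thus Pol Q = (End Q)^*, and
   Pol Q is always a clone. *)
From Stdlib Require Import FunctionalExtensionality PropExtensionality.
From mathcomp Require Import all_boot.

Section Translations.
Variable A : finType.
Implicit Types (f : op A) (rho : relation A) (g : A -> A).

Lemma preservesU_translation f rho g :
  reflexive_rel rho -> preserves f rho -> is_translation f g ->
  preservesU g rho.
Proof.
move=> rho_refl f_rho [i [a g_def]] r r_rho.
have := f_rho (fun k => if k == i then r else fun _ => a k).
have -> : (fun j => opfun f (fun k => (if k == i then r else fun _ => a k) j))
          = (fun j => g (r j)).
  by apply: functional_extensionality => j; rewrite g_def; congr (opfun f);
     apply: functional_extensionality => l; rewrite /upd; case: (l == i).
by apply=> k; case: (k == i).
Qed.

Lemma transitive_rel_diag rho (h : 'I_(rarity rho) -> A -> A) x :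
  transitive_rel rho -> (forall i, preservesU (h i) rho) ->
  (forall y, rmem rho (fun i => h i y)) -> rmem rho x ->
  rmem rho (fun i => h i (x i)).
Proof.
move=> rho_trans h_rho h_const x_rho.
apply: (rho_trans (fun i j => h i (x j))) => [i | j]; first exact: h_rho.
exact: h_const.
Qed.

Lemma preserves_of_translations (x0 : A) f rho :
  gquord rho -> (forall g, is_translation f g -> preservesU g rho) ->
  preserves f rho.
Proof.
move=> [rho_refl rho_trans] trl_rho r r_rho.
pose mix k i a := fun l : 'I_(arity f).+1 => if l < k then r l i else a l.
have mix_rho k : k <= (arity f).+1 ->
    forall a, rmem rho (fun i => opfun f (mix k i a)).
  elim: k => [_ a | k IHk lt_k a].
    have -> : (fun i => opfun f (mix 0 i a)) = (fun _ => opfun f a) by [].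
    exact: rho_refl.
  pose k' := Ordinal lt_k.
  have mixS i : upd (mix k i a) k' (r k' i) = mix k.+1 i a.
    apply: functional_extensionality => l; rewrite /upd /mix ltnS.
    have -> : (l == k') = (nat_of_ord l == k) by [].
    case: (ltngtP l k) => // l_k.
    by congr (r _ i); apply: val_inj.
  have mix_upd i y : upd (mix k i a) k' y = mix k i (upd a k' y).
    apply: functional_extensionality => l; rewrite /upd /mix.
    have -> : (l == k') = (nat_of_ord l == k) by [].
    by case: eqP => // ->; rewrite ltnn.
  have -> : (fun i => opfun f (mix k.+1 i a))
            = (fun i => opfun f (upd (mix k i a) k' (r k' i))).
    by apply: functional_extensionality => i; rewrite mixS.
  apply: (@transitive_rel_diag rho (fun i y => opfun f (upd (mix k i a) k' y)))
    => // [i | y].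
  - by apply: trl_rho; exists k', (mix k i a).
  - have -> : (fun i => opfun f (upd (mix k i a) k' y))
              = (fun i => opfun f (mix k i (upd a k' y))).
      by apply: functional_extensionality => i; rewrite mix_upd.
    exact: IHk (ltnW lt_k) _.
have := mix_rho _ (leqnn _) (fun _ => x0).
congr (rmem rho); apply: functional_extensionality => i; congr (opfun f).
by apply: functional_extensionality => l; rewrite /mix ltn_ord.
Qed.

Lemma preserves_iff_translations (x0 : A) f rho : gquord rho ->
  preserves f rho <-> forall g, is_translation f g -> preservesU g rho.
Proof.
move=> rho_gq; split; last exact: preserves_of_translations.
by move=> f_rho g; apply: preservesU_translation (proj1 rho_gq) f_rho.
Qed.

Lemma gQuordF_trl (x0 : A) (F : op A -> Prop) rho :
  gQuordF F rho <-> gQuordU (trl F) rho.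
Proof.
split=> -[rho_gq F_rho]; split=> //.
  move=> g [f [Ff f_g]].
  exact: (preserves_iff_translations x0 f rho rho_gq).1 (F_rho f Ff) g f_g.
move=> f Ff; apply/(preserves_iff_translations x0 f rho rho_gq) => g f_g.
by apply: F_rho; exists f.
Qed.

Lemma Pol_star_End (x0 : A) (Q : relation A -> Prop) :
  (forall rho, Q rho -> gquord rho) -> Pol Q = star (End Q).
Proof.
move=> Q_gq; apply: functional_extensionality => f.
apply: propositional_extensionality.
split=> [f_Q g f_g | f_Q] rho Qrho; have rho_gq := Q_gq _ Qrho.
  exact: (preserves_iff_translations x0 f rho rho_gq).1 (f_Q _ Qrho) g f_g.
by apply/(preserves_iff_translations x0 f rho rho_gq) => g f_g; apply: f_Q.
Qed.

End Translations.

Lemma clone_Pol (A : finType) (Q : relation A -> Prop) : clone (Pol Q).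
Proof.
split=> [n i rho _ r r_rho | f m gs f_Q gs_Q rho Qrho r r_rho] //=.
by apply: (f_Q rho Qrho (fun k i => gs k (fun l => r l i))) => k; apply: gs_Q.
Qed.

Lemma monoid_End (A : finType) (Q : relation A -> Prop) : monoid (End Q).
Proof.
split=> [rho _ // | g h g_Q h_Q rho Qrho r r_rho].
exact: (g_Q _ Qrho _ (h_Q _ Qrho _ r_rho)).
Qed.

Lemma u_closed_of_clone_star (A : finType) (M : (A -> A) -> Prop) :
  monoid M -> clone (star M) -> u_closed M.
Proof.
move=> M_monoid M_clone; split=> // g.
by split=> [Mg_closure | Mg N _ MN _]; [apply: Mg_closure | apply: MN].
Qed.

Theorem corollary3p8 (A : finType) (HA : 0 < #|A|)
  (F : op A -> Prop) (Q : relation A -> Prop)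
  (HQ : forall rho, Q rho -> gquord rho) :
  (forall rho, gQuordF F rho <-> gQuordU (trl F) rho) /\
  (forall f, Pol Q f <-> star (End Q) f) /\
  clone (star (End Q)) /\
  u_closed (End Q).
Proof.
pose x0 : A := enum_val (Ordinal HA).
have PolE : Pol Q = star (End Q) by apply: Pol_star_End.
have clone_star : clone (star (End Q)) by rewrite -PolE; apply: clone_Pol.
split; first exact: gQuordF_trl.
split; first by rewrite PolE.
split=> //; apply: u_closed_of_clone_star clone_star; exact: monoid_End.
Qed.
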